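(* Let $\mathcal{C}$ be a $(2,1)$ binary convolutional code with polynomial generator matrix $(g_1(D)\ \ g_2(D))$, where $g_i(D)=\sum_{j=0}^{m}g_{i,j}D^j\in\mathbb{F}_2[D]$ and $m$ is the maximum degree of $g_1,g_2$. Then for every $k\ge m+1$, the $[2k,k]$ linear code $\mathcal{C}_{\mathrm{tb}}$ obtained from $\mathcal{C}$ by tailbiting is isodual.
   Context: Tailbiting: for $k\ge m+1$, let $\mathbf{g}=(g_{1,0},g_{2,0},g_{1,1},g_{2,1},\ldots,g_{1,m},g_{2,m},0,\ldots,0)\in\mathbb{F}_2^{2k}$. The tailbiting code $\mathcal{C}_{\mathrm{tb}}\subseteq\mathbb{F}_2^{2k}$ is the binary linear code generated by the $k\times 2k$ matrix whose $j$-th row ($j=0,\ldots,k-1$) is the cyclic shift of $\mathbf{g}$ to the right by $2j$ positions (so the last $m$ rows wrap around). A binary linear code $\mathcal{C}'$ of length $N$ is isodual if there is a permutation $\pi$ of the $N$ coordinates with $\mathcal{C}'=\pi(\mathcal{C}'^\perp)$, where $\mathcal{C}'^\perp$ is the dual code with respect to the standard inner product.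
   Formalization: The $k\times 2k$ tailbiting generator matrix is also assumed to have rank k, so $\mathcal{C}_{\mathrm{tb}}$ has dimension k as a [2k,k] code. The paper assumes this as well. *)

From HB Require Import structures.
From mathcomp Require Import all_boot all_order all_algebra all_fingroup.
Set Implicit Arguments. Unset Strict Implicit. Unset Printing Implicit Defensive.
Import GRing.Theory.
Local Open Scope ring_scope.

Definition dual_code n (C : pred 'rV['F_2]_n) : pred 'rV['F_2]_n :=
  [pred w | [forall v, (v \in C) ==> (v *m w^T == 0)]].

(* Image of a code under a coordinate permutation s: (pi C) = { v o s^-1 | v in C }.
   Isodual: C = pi(C^perp) for some permutation pi of the coordinates. *)
Definition perm_code n (s : 'S_n) (C : pred 'rV['F_2]_n) : pred 'rV['F_2]_n :=
  [pred w | col_perm s w \in C].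

Definition isodual n (C : pred 'rV['F_2]_n) : Prop :=
  exists s : 'S_n, forall v, (v \in C) = (v \in perm_code s (dual_code C)).

(* The interleaved coefficient vector g = (g10,g20,g11,g21,...,g1m,g2m,0,...,0):
   entry i is g1_(i/2) if i is even, g2_(i/2) if i is odd (coefficients beyond
   the degree are 0). *)
Definition tb_entry (g1 g2 : {poly 'F_2}) (i : nat) : 'F_2 :=
  if odd i then g2`_(i./2) else g1`_(i./2).

(* k x 2k tailbiting generator matrix: row j is g cyclically shifted right by 2j. *)
Definition tb_gen (g1 g2 : {poly 'F_2}) (k : nat) : 'M['F_2]_(k, 2 * k) :=
  \matrix_(j < k, c < 2 * k) tb_entry g1 g2 ((c + (2 * k - 2 * j)) %% (2 * k)).

Definition tb_code (g1 g2 : {poly 'F_2}) (k : nat) : pred 'rV['F_2]_(2 * k) :=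
  [pred v | (v <= tb_gen g1 g2 k)%MS].
Arguments tb_code g1 g2 k : clear implicits.
Arguments tb_gen g1 g2 k : clear implicits.

(* Index the 2k coordinates as pairs (i, b), i in Z/k, b in {0, 1}, the
   coordinate 2i + b.  Row j of the tailbiting generator matrix G carries the
   coefficient of g_(b+1) of degree i - j at (i, b).  Let sigma be the
   coordinate permutation (i, b) |-> (-i, 1 - b).  The inner product of row j
   of G with row l of G sigma is
     sum_i g1_(i-j) g2_(-i-l) + sum_i g2_(i-j) g1_(-i-l),
   and the substitution i |-> j - l - i turns the second sum into the first,
   so over F_2 it vanishes.  Hence the row space of G sigma, of dimension k,
   lies in the dual code, of dimension 2k - k, so the two coincide. *)

From mathcomp Require Import all_boot all_order all_algebra all_fingroup.
From mathcomp Require Import zify.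

Set Implicit Arguments.
Unset Strict Implicit.
Unset Printing Implicit Defensive.

Import GRing.Theory.
Local Open Scope ring_scope.

Lemma sum_ord_double (V : nmodType) (K : nat) (F : nat -> V) :
  \sum_(c < 2 * K) F c = \sum_(i < K) (F (2 * i)%N + F (2 * i).+1).
Proof.
rewrite -(big_mkord xpredT F).
rewrite -(big_mkord xpredT (fun i => F (2 * i)%N + F (2 * i).+1)).
elim: K => [|K IHK]; first by rewrite !big_geq.
rewrite (_ : (2 * K.+1 = (2 * K).+2)%N); last by lia.
by rewrite !big_nat_recr //= IHK addrA.
Qed.

Lemma sum_reflect_convolution (Z : finZmodType) (R : comPzSemiRingType)
    (a b : Z -> R) (j l : Z) :
  \sum_(i : Z) b (i - j) * a (- i - l) = \sum_(i : Z) a (i - j) * b (- i - l).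
Proof.
rewrite (reindex_inj (subrI (j - l))); apply: eq_bigr => i _.
have -> : j - l - i - j = - i - l by rewrite -addrA addrC !addrA subrK.
have -> : - (j - l - i) - l = i - j by rewrite !opprB addrA addrAC addrK.
exact: mulrC.
Qed.

Section RowSpaces.

Variable F : fieldType.

Lemma col_perm_submx n m1 m2 (s : 'S_n)
    (A : 'M[F]_(m1, n)) (B : 'M[F]_(m2, n)) :
  (col_perm s A <= col_perm s B)%MS = (A <= B)%MS.
Proof. by rewrite !col_permE submxMfree // row_free_unit unitmx_perm. Qed.

Lemma mxrank_col_perm m n (s : 'S_n) (A : 'M[F]_(m, n)) :
  \rank (col_perm s A) = \rank A.
Proof. by rewrite col_permE mxrankMfree // row_free_unit unitmx_perm. Qed.

Lemma eqmx_kermx_tr m1 m2 n (A : 'M[F]_(m1, n)) (B : 'M[F]_(m2, n)) :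
  A *m B^T = 0 -> (\rank A + \rank B)%N = n -> (B == kermx A^T)%MS.
Proof.
move=> AB0 rankAB.
have subB : (B <= kermx A^T)%MS.
  by rewrite sub_kermx -[B]trmxK -trmx_mul AB0 trmx0.
have rank_ker : \rank (kermx A^T) = \rank B.
  by rewrite mxrank_ker mxrank_tr -{1}rankAB addKn.
by rewrite -(mxrank_leqif_eq subB).2 rank_ker.
Qed.

End RowSpaces.

Lemma dual_code_submx r n (G : 'M['F_2]_(r, n)) (w : 'rV_n) :
  (w \in dual_code [pred v | (v <= G)%MS]) = (w <= kermx G^T)%MS.
Proof.
rewrite sub_kermx inE; apply/forallP/eqP => [orthw | wG0 v].
  apply: trmx_inj; rewrite trmx_mul trmxK trmx0.
  apply/row_matrixP => i; rewrite row_mul row0.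
  by have /implyP := orthw (row i G); rewrite inE row_sub => /(_ isT)/eqP.
apply/implyP; rewrite inE => /submxP[x ->].
by rewrite -mulmxA -[G]trmxK -trmx_mul wG0 trmx0 mulmx0.
Qed.

Lemma isodual_row_space r n (G : 'M['F_2]_(r, n)) (s : 'S_n) :
  (\rank G + \rank G)%N = n -> G *m (col_perm s G)^T = 0 ->
  isodual [pred v | (v <= G)%MS].
Proof.
move=> rankG orthG.
have dualG : (col_perm s G == kermx G^T)%MS.
  by apply: eqmx_kermx_tr; rewrite ?mxrank_col_perm.
exists s => v; rewrite [in RHS]inE dual_code_submx -(eqmxP dualG).
by rewrite col_perm_submx.
Qed.

Lemma modn_doubleS y K :
  (0 < K)%N -> ((2 * y).+1 %% (2 * K) = (2 * (y %% K)).+1)%N.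
Proof.
move=> K_gt0; have -> : ((2 * y).+1 = y %/ K * (2 * K) + (2 * (y %% K)).+1)%N.
  by rewrite {1}(divn_eq y K); lia.
by rewrite modnMDl modn_small //; have := ltn_pmod y K_gt0; lia.
Qed.

Section Tailbiting.

Variables (g1 g2 : {poly 'F_2}) (n : nat).
Local Notation k := n.+1.

Definition tb_row (j c : nat) : 'F_2 :=
  tb_entry g1 g2 ((c + (2 * k - 2 * j)) %% (2 * k)).

Lemma tb_row_double (j i : 'I_k) : tb_row j (2 * i) = g1`_(i - j)%R.
Proof.
rewrite /tb_row; have -> : (2 * i + (2 * k - 2 * j) = 2 * (i + (k - j)))%N.
  by have := ltn_ord j; lia.
by rewrite -muln_modr /tb_entry mul2n odd_double half_double /= modnDmr.
Qed.

Lemma tb_row_doubleS (j i : 'I_k) : tb_row j (2 * i).+1 = g2`_(i - j)%R.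
Proof.
rewrite /tb_row.
have -> : ((2 * i).+1 + (2 * k - 2 * j) = (2 * (i + (k - j))).+1)%N.
  by have := ltn_ord j; lia.
rewrite modn_doubleS // /tb_entry /= mul2n odd_double uphalf_double.
by rewrite /= modnDmr.
Qed.

Definition mirror (c : nat) : nat :=
  let i : 'I_k := inord c./2 in
  if odd c then (2 * (- i)%R)%N else (2 * (- i)%R).+1.

Lemma mirror_double (i : 'I_k) : mirror (2 * i) = (2 * (- i)%R).+1.
Proof. by rewrite /mirror mul2n odd_double half_double inord_val. Qed.

Lemma mirror_doubleS (i : 'I_k) : mirror (2 * i).+1 = (2 * (- i)%R)%N.
Proof. by rewrite /mirror /= mul2n odd_double uphalf_double inord_val. Qed.

Lemma mirror_lt c : (mirror c < 2 * k)%N.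
Proof.
rewrite /mirror; have := ltn_ord (- (inord c./2 : 'I_k)).
by case: odd => /=; lia.
Qed.

Lemma mirrorK c : (c < 2 * k)%N -> mirror (mirror c) = c.
Proof.
move=> c_lt; have half_lt : (c./2 < k)%N by lia.
have -> : c = (odd c + 2 * Ordinal half_lt)%N.
  by rewrite /= mul2n odd_double_half.
case: (odd c); rewrite ?add0n ?add1n.
  by rewrite mirror_doubleS mirror_double opprK.
by rewrite mirror_double mirror_doubleS opprK.
Qed.

Definition mirror_ord (c : 'I_(2 * k)) : 'I_(2 * k) := Ordinal (mirror_lt c).

Lemma mirror_ordK : involutive mirror_ord.
Proof. by move=> c; apply: val_inj; rewrite /= mirrorK. Qed.

Definition mirror_perm : 'S_(2 * k) := perm (inv_inj mirror_ordK).

Lemma tb_gen_mirror_orthogonal :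
  tb_gen g1 g2 k *m (col_perm mirror_perm (tb_gen g1 g2 k))^T = 0.
Proof.
apply/matrixP => j l; rewrite !mxE.
under eq_bigr do rewrite !mxE permE /=.
rewrite (sum_ord_double k (fun c => tb_row j c * tb_row l (mirror c))).
under eq_bigr do
  rewrite mirror_double mirror_doubleS !tb_row_double !tb_row_doubleS.
rewrite big_split /=.
rewrite (sum_reflect_convolution (fun x : 'I_k => g1`_x) (fun x => g2`_x)).
exact/addrr_pchar2/pchar_Fp.
Qed.

End Tailbiting.

Theorem proposition2 (g1 g2 : {poly 'F_2}) (k : nat) :
  let m := maxn (size g1).-1 (size g2).-1 in
  (m.+1 <= k)%N ->
  mxrank (tb_gen g1 g2 k) = k ->
  isodual (tb_code g1 g2 k).
Proof.
(* The degree bound only serves to rule out k = 0. *)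
move=> m; case: k => [//|n] _ rank_tb; rewrite /tb_code.
apply: (isodual_row_space (s := mirror_perm n)).
  by rewrite rank_tb; lia.
exact: tb_gen_mirror_orthogonal.
Qed.
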